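(* In the setting described in the context, for $\mathbf{d}\in\mathbb{R}^p$ and $\mathbf{L}\in\mathbb{R}^{p\times r}$ let $\mathcal{X}_0(\mathbf{L})=\{(\bar{\mathbf{r}},\bar{\mathbf{s}}):(\bar{\mathbf{r}},\bar{\mathbf{s}})\in\arg\min_{\mathbf{r},\mathbf{s}}\hat\ell(\mathbf{d},\mathbf{L},\mathbf{r},\mathbf{s})\}$ be the set of all minimizers. Then: (1) the sub-gradient of $\ell(\mathbf{d},\cdot)$ at $\mathbf{L}$ is $\partial_{\mathbf{L}}\ell(\mathbf{d},\mathbf{L})=\mathrm{conv}\{(\mathbf{L}\mathbf{r}^*+\mathbf{s}^*-\mathbf{d})(\mathbf{r}^* )^T:(\mathbf{r}^*,\mathbf{s}^* )\in\mathcal{X}_0(\mathbf{L})\}$, where $\mathrm{conv}$ denotes the convex hull; (2) this sub-gradient is uniformly bounded, and $\ell(\mathbf{d},\mathbf{L})$ is uniformly Lipschitz in $\mathbf{L}$.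
   Context: Fix integers $p,r\ge 1$ and constants $\lambda_1,\lambda_2>0$. Let $\mathcal{G}$ be a finite collection of subsets of $\{1,\dots,p\}$. For $\mathbf{s}\in\mathbb{R}^p$ and $g\in\mathcal{G}$, let $\mathbf{s}_{|g}$ be the vector equal to $\mathbf{s}$ on indices in $g$ and zero elsewhere, and $\|\mathbf{s}\|_{\ell_1/\ell_\infty}=\sum_{g\in\mathcal{G}}\|\mathbf{s}_{|g}\|_\infty$. Define $\hat\ell(\mathbf{d},\mathbf{L},\mathbf{r},\mathbf{s})=\tfrac12\|\mathbf{d}-\mathbf{L}\mathbf{r}-\mathbf{s}\|_2^2+\tfrac{\lambda_1}{2}\|\mathbf{r}\|_2^2+\lambda_2\|\mathbf{s}\|_{\ell_1/\ell_\infty}$ (for $\mathbf{r}\in\mathbb{R}^r,\mathbf{s}\in\mathbb{R}^p$) and $\ell(\mathbf{d},\mathbf{L})=\min_{\mathbf{r},\mathbf{s}}\hat\ell(\mathbf{d},\mathbf{L},\mathbf{r},\mathbf{s})$. The data vectors $\mathbf{d}$ range over a uniformly bounded set (there is $M$ with $\|\mathbf{d}\|_2\le M$), and $\mathbf{L}$ ranges over a compact set $\mathcal{L}\subset\mathbb{R}^{p\times r}$ (the set containing the iterates of the online algorithm, whose $t$-th iterate is $\mathbf{L}_t=\mathbf{B}_t(\mathbf{A}_t+\lambda_1\mathbf{I})^{-1}$ with $\mathbf{A}_t=\sum_{i\le t}\mathbf{r}_i\mathbf{r}_i^T$, $\mathbf{B}_t=\sum_{i\le t}(\mathbf{d}_i-\mathbf{s}_i)\mathbf{r}_i^T$,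 and $(\mathbf{r}_i,\mathbf{s}_i)$ a minimizer of $\hat\ell(\mathbf{d}_i,\mathbf{L}_{i-1},\cdot,\cdot)$). ''Uniformly'' means with constants independent of $\mathbf{d}$ and $\mathbf{L}$ in these sets. *)

From HB Require Import structures.
From mathcomp Require Import all_boot all_order all_algebra.
From mathcomp Require Import all_classical all_reals all_analysis.
Set Implicit Arguments. Unset Strict Implicit. Unset Printing Implicit Defensive.
Import Order.TTheory GRing.Theory Num.Theory.
Import numFieldNormedType.Exports.
Local Open Scope classical_set_scope.
Local Open Scope ring_scope.

Section Defs.
Variable R : realType.

(* Frobenius inner product and (Euclidean / Frobenius) norm of matrices;
   vectors are column matrices 'cV_n = 'M_(n,1). *)
Definition mdot (m n : nat) (A B : 'M[R]_(m, n)) : R :=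
  \sum_(i < m) \sum_(j < n) A i j * B i j.
Definition fnorm (m n : nat) (A : 'M[R]_(m, n)) : R := Num.sqrt (mdot A A).

Definition ginf_norm (p : nat) (s : 'cV[R]_p) (g : {set 'I_p}) : R :=
  \big[Num.max/0]_(i in g) `|s i 0|.

Definition l1linf (p : nat) (G : {set {set 'I_p}}) (s : 'cV[R]_p) : R :=
  \sum_(g in G) ginf_norm s g.

Definition lhat (p r : nat) (lam1 lam2 : R) (G : {set {set 'I_p}})
  (d : 'cV[R]_p) (L : 'M[R]_(p, r)) (rv : 'cV[R]_r) (s : 'cV[R]_p) : R :=
  2^-1 * fnorm (d - L *m rv - s) ^+ 2 + lam1 / 2 * fnorm rv ^+ 2
  + lam2 * l1linf G s.

(* ell(d, L) = min_{r,s} \hat ell(d, L, r, s), written as the infimum of the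
   set of attained values (this infimum is attained). *)
Definition ell (p r : nat) (lam1 lam2 : R) (G : {set {set 'I_p}})
  (d : 'cV[R]_p) (L : 'M[R]_(p, r)) : R :=
  inf [set lhat lam1 lam2 G d L rs.1 rs.2 | rs in [set: 'cV[R]_r * 'cV[R]_p]].

Definition X0 (p r : nat) (lam1 lam2 : R) (G : {set {set 'I_p}})
  (d : 'cV[R]_p) (L : 'M[R]_(p, r)) : set ('cV[R]_r * 'cV[R]_p) :=
  [set rs | forall (r' : 'cV[R]_r) (s' : 'cV[R]_p),
      lhat lam1 lam2 G d L rs.1 rs.2 <= lhat lam1 lam2 G d L r' s'].

Definition conv_hull (m n : nat) (S : set 'M[R]_(m, n)) : set 'M[R]_(m, n) :=
  [set X | exists (k : nat) (w : 'I_k -> R) (P : 'I_k -> 'M[R]_(m, n)),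
      (forall i, 0 <= w i) /\ \sum_(i < k) w i = 1 /\ (forall i, S (P i)) /\
      X = \sum_(i < k) w i *: P i].

(* Clarke's generalized directional derivative, in the form
   <xi, V> <= f^o(L; V) := limsup_{Y -> L, t -> 0+} (f(Y + tV) - f(Y)) / t,
   unfolded via the definition of limsup. *)
Definition le_clarke_dd (m n : nat) (f : 'M[R]_(m, n) -> R)
  (L V : 'M[R]_(m, n)) (a : R) : Prop :=
  forall eps delta : R, 0 < eps -> 0 < delta ->
    exists (Y : 'M[R]_(m, n)) (t : R),
      fnorm (Y - L) < delta /\ 0 < t < delta /\
      a - eps <= (f (Y + t *: V) - f Y) / t.

Definition clarke_subdiff (m n : nat) (f : 'M[R]_(m, n) -> R)
  (L : 'M[R]_(m, n)) : set 'M[R]_(m, n) :=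
  [set xi | forall V : 'M[R]_(m, n), le_clarke_dd f L V (mdot xi V)].

End Defs.

(* For fixed L the objective lhat(d, L, r, s) is strongly convex in (r, s): the
   midpoint inequality holds with the defect ||L dr + ds||^2 + lam1 ||dr||^2 (the [gap]).
   Hence near-minimizers form a Cauchy sequence, so a minimizer (r0, s0) exists; it is
   unique, and comparing with (0, 0) gives ||r0|| <= ||d|| / sqrt lam1.  As lhat is
   quadratic in L, ell(L + H) <= ell(L) + <g(L), H> + ||H r0||^2 / 2 with
   g(L) = (L r0 + s0 - d) r0^T; this yields the uniform Lipschitz bound.  The same
   inequality, combined with the Hoelder continuity of L |-> (r0, s0) that the gap
   provides, shows that the Clarke subdifferential of ell at L is the singleton {g(L)},
   which is also the convex hull of the gradients over the one-point set X0(L). *)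

From HB Require Import structures.
From mathcomp Require Import all_boot all_order all_algebra.
From mathcomp Require Import all_classical all_reals all_analysis.
From mathcomp Require Import ring lra.
Import Order.TTheory GRing.Theory Num.Theory.
Import numFieldNormedType.Exports.
Local Open Scope classical_set_scope.
Local Open Scope ring_scope.
Set Implicit Arguments. Unset Strict Implicit.

Lemma ler_of_sqr (R : realDomainType) (x y : R) :
  0 <= y -> x ^+ 2 <= y ^+ 2 -> x <= y.
Proof.
move=> y0 xy; apply: le_trans (ler_norm x) _.
by rewrite -(ler_pXn2r (n := 2)) ?nnegrE ?normr_ge0 // real_normK ?num_real.
Qed.

Lemma ler_sqr_of (R : realDomainType) (x y : R) :
  0 <= x -> x <= y -> x ^+ 2 <= y ^+ 2.
Proof. by move=> x0 xy; rewrite ler_pXn2r ?nnegrE // (le_trans x0). Qed.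

Lemma cauchy_schwarz_sum (R : realFieldType) (I : finType) (f g : I -> R) :
  (\sum_i f i * g i) ^+ 2 <= (\sum_i f i ^+ 2) * (\sum_i g i ^+ 2).
Proof.
set a := \sum_i f i ^+ 2; set b := \sum_i f i * g i; set c := \sum_i g i ^+ 2.
have a0 : 0 <= a by apply: sumr_ge0 => i _; exact: sqr_ge0.
have : 0 <= \sum_i (a * g i - b * f i) ^+ 2.
  by apply: sumr_ge0 => i _; exact: sqr_ge0.
have -> : \sum_i (a * g i - b * f i) ^+ 2 = a * (a * c - b ^+ 2).
  rewrite (eq_bigr (fun i =>
    a ^+ 2 * g i ^+ 2 - 2 * a * b * (f i * g i) + b ^+ 2 * f i ^+ 2)); last first.
    by move=> i _; ring.
  by rewrite big_split /= sumrB -!mulr_sumr -/a -/b -/c; ring.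
have [a_eq0 _|a_neq0] := eqVneq a 0.
  have f0 i : f i = 0.
    apply/eqP; rewrite -sqrf_eq0; apply/eqP.
    by apply: (psumr_eq0P (fun i _ => sqr_ge0 (f i)) a_eq0).
  by rewrite /b big1 ?expr0n /= ?a_eq0 ?mul0r // => i _; rewrite f0 mul0r.
by rewrite pmulr_rge0 ?subr_ge0 // lt_def a_neq0.
Qed.

Section Frobenius.
Variables (R : realType) (m n : nat).
Implicit Types A B C : 'M[R]_(m, n).

Lemma mdotE A B : mdot A B = \sum_(ij : 'I_m * 'I_n) A ij.1 ij.2 * B ij.1 ij.2.
Proof. by rewrite /mdot pair_big. Qed.

Lemma mdotC A B : mdot A B = mdot B A.
Proof. by apply: eq_bigr => i _; apply: eq_bigr => j _; rewrite mulrC. Qed.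

Lemma mdotDl A B C : mdot (A + B) C = mdot A C + mdot B C.
Proof.
rewrite /mdot -big_split; apply: eq_bigr => i _; rewrite -big_split.
by apply: eq_bigr => j _; rewrite !mxE mulrDl.
Qed.

Lemma mdotZl c A B : mdot (c *: A) B = c * mdot A B.
Proof.
rewrite /mdot mulr_sumr; apply: eq_bigr => i _; rewrite mulr_sumr.
by apply: eq_bigr => j _; rewrite !mxE mulrA.
Qed.

Lemma mdotNl A B : mdot (- A) B = - mdot A B.
Proof. by rewrite -scaleN1r mdotZl mulN1r. Qed.

Lemma mdotBl A B C : mdot (A - B) C = mdot A C - mdot B C.
Proof. by rewrite mdotDl mdotNl. Qed.

Lemma mdotDr A B C : mdot A (B + C) = mdot A B + mdot A C.
Proof. by rewrite mdotC mdotDl !(mdotC A). Qed.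

Lemma mdotZr c A B : mdot A (c *: B) = c * mdot A B.
Proof. by rewrite mdotC mdotZl mdotC. Qed.

Lemma mdotNr A B : mdot A (- B) = - mdot A B.
Proof. by rewrite mdotC mdotNl mdotC. Qed.

Lemma mdotBr A B C : mdot A (B - C) = mdot A B - mdot A C.
Proof. by rewrite mdotDr mdotNr. Qed.

Lemma mdotxxE A : mdot A A = \sum_(ij : 'I_m * 'I_n) A ij.1 ij.2 ^+ 2.
Proof. by rewrite mdotE; under eq_bigr do rewrite -expr2. Qed.

Lemma mdotxx_ge0 A : 0 <= mdot A A.
Proof. by rewrite mdotxxE; apply: sumr_ge0 => ij _; exact: sqr_ge0. Qed.

Lemma mdotxx_eq0 A : mdot A A = 0 -> A = 0.
Proof.
rewrite mdotxxE => AA0; apply/matrixP => i j; rewrite mxE; apply/eqP.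
rewrite -sqrf_eq0; apply/eqP.
exact: (psumr_eq0P (fun ij _ => sqr_ge0 (A ij.1 ij.2)) AA0 (i := (i, j)) isT).
Qed.

Lemma mdot_le_fnorm A B : mdot A B <= fnorm A * fnorm B.
Proof.
apply: ler_of_sqr; first by rewrite mulr_ge0 ?sqrtr_ge0.
rewrite exprMn !sqr_sqrtr ?mdotxx_ge0 // mdotE !mdotxxE.
exact: (cauchy_schwarz_sum (fun ij : 'I_m * 'I_n => A ij.1 ij.2)).
Qed.

Lemma fnorm_ge0 A : 0 <= fnorm A.
Proof. exact: sqrtr_ge0. Qed.

Lemma fnorm_sqr A : fnorm A ^+ 2 = mdot A A.
Proof. by rewrite sqr_sqrtr // mdotxx_ge0. Qed.

Lemma fnorm_eq0 A : fnorm A = 0 -> A = 0.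
Proof. by move=> A0; apply: mdotxx_eq0; rewrite -fnorm_sqr A0 expr0n. Qed.

Lemma fnorm0 : fnorm (0 : 'M[R]_(m, n)) = 0.
Proof. by rewrite /fnorm -(scale0r 0) mdotZl mul0r sqrtr0. Qed.

Lemma fnormN A : fnorm (- A) = fnorm A.
Proof. by rewrite /fnorm mdotNl mdotNr opprK. Qed.

Lemma fnormZ c A : fnorm (c *: A) = `|c| * fnorm A.
Proof. by rewrite /fnorm mdotZl mdotZr mulrA -expr2 sqrtrM ?sqr_ge0 // sqrtr_sqr. Qed.

Lemma fnorm_sqrD A B :
  fnorm (A + B) ^+ 2 = fnorm A ^+ 2 + 2 * mdot A B + fnorm B ^+ 2.
Proof. by rewrite !fnorm_sqr mdotDl !mdotDr (mdotC B A); ring. Qed.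

Lemma fnorm_sqrB A B :
  fnorm (A - B) ^+ 2 = fnorm A ^+ 2 - 2 * mdot A B + fnorm B ^+ 2.
Proof. by rewrite fnorm_sqrD fnormN mdotNr; ring. Qed.

Lemma fnorm_sqr_mid A B :
  fnorm (2^-1 *: (A + B)) ^+ 2 =
  2^-1 * fnorm A ^+ 2 + 2^-1 * fnorm B ^+ 2 - 4^-1 * fnorm (A - B) ^+ 2.
Proof.
rewrite fnormZ exprMn fnorm_sqrB fnorm_sqrD ger0_norm ?invr_ge0 ?ler0n //.
by field.
Qed.

Lemma fnormD_le A B : fnorm (A + B) <= fnorm A + fnorm B.
Proof.
apply: ler_of_sqr; first by rewrite addr_ge0 ?fnorm_ge0.
by rewrite fnorm_sqrD sqrrD lerD2r lerD2l mulr2n mulrDl mul1r lerD ?mdot_le_fnorm.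
Qed.

Lemma entry_le_fnorm A i j : `|A i j| <= fnorm A.
Proof.
apply: ler_of_sqr; first exact: fnorm_ge0.
rewrite fnorm_sqr mdotxxE real_normK ?num_real // (bigD1 (i, j)) //= lerDl.
by apply: sumr_ge0 => ij _; exact: sqr_ge0.
Qed.

Lemma fnorm_le_entries A c :
  0 <= c -> (forall i j, `|A i j| <= c) -> fnorm A <= (m * n)%:R * c.
Proof.
move=> c0 Ac; apply: ler_of_sqr; first by rewrite mulr_ge0.
rewrite fnorm_sqr mdotxxE.
apply: (@le_trans _ _ (\sum_(ij : 'I_m * 'I_n) c ^+ 2)).
  apply: ler_sum => ij _; rewrite -real_normK ?num_real //.
  by rewrite ler_sqr_of ?normr_ge0.
rewrite sumr_const card_prod !card_ord -[_ *+ _]mulr_natl exprMn ler_wpM2r ?sqr_ge0 //.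
by rewrite -natrX ler_nat; case: (m * n)%N => // k; rewrite -mulnn leq_pmulr.
Qed.

End Frobenius.

Section FrobeniusProduct.
Variable R : realType.

Lemma fnorm_mulmx_le (m n q : nat) (A : 'M[R]_(m, n)) (B : 'M[R]_(n, q)) :
  fnorm (A *m B) <= fnorm A * fnorm B.
Proof.
apply: ler_of_sqr; first by rewrite mulr_ge0 ?fnorm_ge0.
rewrite exprMn !fnorm_sqr /mdot mulr_suml; apply: ler_sum => i _.
rewrite (exchange_big _ _ _ _ _ (fun j k => B j k * B j k)) mulr_sumr.
apply: ler_sum => k _; rewrite mxE.
exact: (cauchy_schwarz_sum (fun j => A i j) (fun j => B j k)).
Qed.

Lemma fnorm_tr (m n : nat) (A : 'M[R]_(m, n)) : fnorm A^T = fnorm A.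
Proof.
rewrite /fnorm /mdot exchange_big; congr Num.sqrt.
by apply: eq_bigr => i _; apply: eq_bigr => j _; rewrite !mxE.
Qed.

Lemma mdot_outer (m n : nat) (a : 'cV[R]_m) (b : 'cV[R]_n) (V : 'M[R]_(m, n)) :
  mdot (a *m b^T) V = mdot a (V *m b).
Proof.
apply: eq_bigr => i _; rewrite big_ord1 !mxE mulr_sumr.
by apply: eq_bigr => j _; rewrite !mxE big_ord1 !mxE; ring.
Qed.

End FrobeniusProduct.

Section GroupNorm.
Variables (R : realType) (p : nat) (G : {set {set 'I_p}}).
Implicit Types (s : 'cV[R]_p) (g : {set 'I_p}).

Lemma ginf_norm_ge0 s g : 0 <= ginf_norm s g.
Proof. by rewrite /ginf_norm; elim/big_ind: _ => // x y x0 y0; rewrite le_max x0. Qed.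

Lemma ginf_norm_le s g c :
  0 <= c -> (forall i, i \in g -> `|s i 0| <= c) -> ginf_norm s g <= c.
Proof. exact: bigmax_le. Qed.

Lemma ler_ginf_norm s g i : i \in g -> `|s i 0| <= ginf_norm s g.
Proof. exact: (le_bigmax_cond _ (fun i => `|s i 0|)). Qed.

Lemma ginf_normD s1 s2 g : ginf_norm (s1 + s2) g <= ginf_norm s1 g + ginf_norm s2 g.
Proof.
apply: ginf_norm_le => [|i ig]; first by rewrite addr_ge0 ?ginf_norm_ge0.
by rewrite mxE (le_trans (ler_normD _ _)) // lerD ?ler_ginf_norm.
Qed.

Lemma ginf_normZ c s g : 0 <= c -> ginf_norm (c *: s) g <= c * ginf_norm s g.
Proof.
move=> c0; apply: ginf_norm_le => [|i ig]; first by rewrite mulr_ge0 ?ginf_norm_ge0.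
by rewrite mxE normrM ger0_norm // ler_wpM2l ?ler_ginf_norm.
Qed.

Lemma ginf_norm_le_fnorm s g : ginf_norm s g <= fnorm s.
Proof. by apply: ginf_norm_le => [|i _]; [exact: fnorm_ge0 | exact: entry_le_fnorm]. Qed.

Lemma l1linf_ge0 s : 0 <= l1linf G s.
Proof. by apply: sumr_ge0 => g _; exact: ginf_norm_ge0. Qed.

Lemma l1linfD s1 s2 : l1linf G (s1 + s2) <= l1linf G s1 + l1linf G s2.
Proof. by rewrite /l1linf -big_split; apply: ler_sum => g _; exact: ginf_normD. Qed.

Lemma l1linfZ c s : 0 <= c -> l1linf G (c *: s) <= c * l1linf G s.
Proof. by move=> c0; rewrite /l1linf mulr_sumr; apply: ler_sum => g _; exact: ginf_normZ. Qed.

Lemma l1linf_mid s1 s2 :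
  l1linf G (2^-1 *: (s1 + s2)) <= 2^-1 * l1linf G s1 + 2^-1 * l1linf G s2.
Proof.
rewrite -mulrDr (le_trans (l1linfZ _ _)) ?invr_ge0 //.
by rewrite ler_wpM2l ?invr_ge0 ?l1linfD.
Qed.

Lemma l1linf_le_fnorm s : l1linf G s <= #|G|%:R * fnorm s.
Proof.
by rewrite mulr_natl -sumr_const; apply: ler_sum => g _; exact: ginf_norm_le_fnorm.
Qed.

Lemma l1linf0 : l1linf G (0 : 'cV[R]_p) = 0.
Proof.
by apply/eqP; rewrite eq_le l1linf_ge0 (le_trans (l1linf_le_fnorm 0)) // fnorm0 mulr0.
Qed.

Lemma l1linfB_le s1 s2 : l1linf G s2 - l1linf G s1 <= #|G|%:R * fnorm (s2 - s1).
Proof.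
rewrite lerBlDl -[X in l1linf G X](subrK s1 s2) addrC.
by rewrite (le_trans (l1linfD _ _)) // lerD2l l1linf_le_fnorm.
Qed.

End GroupNorm.

Section CauchyRate.
Variable R : realType.

Lemma cauchy_rate_lim (v b : nat -> R) :
  (forall e, 0 < e -> exists N, b N < e) ->
  (forall N n k, (N <= n)%N -> (N <= k)%N -> `|v n - v k| <= b N) ->
  exists l, forall N n, (N <= n)%N -> `|v n - l| <= b N.
Proof.
move=> b0 vb.
have vcv : cvg (v @ \oo).
  apply/cauchy_cvgP; apply: cauchy_exP => e e0.
  have [N bNe] := b0 e e0; exists (v N); exists N => // n /= Nn.
  by rewrite -ball_normE /ball_ /= (le_lt_trans _ bNe) ?vb.
exists (lim (v @ \oo)) => N n Nn; rewrite distrC ler_distl; apply/andP; split.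
  apply: limr_ge => //; exists N => // k /= Nk.
  by have := vb N n k Nn Nk; rewrite ler_distl => /andP[_]; lra.
apply: limr_le => //; exists N => // k /= Nk.
by have := vb N n k Nn Nk; rewrite ler_distl => /andP[+ _]; lra.
Qed.

Lemma cauchy_rate_lim_mx m n (u : nat -> 'M[R]_(m, n)) (b : nat -> R) :
  (forall e, 0 < e -> exists N, b N < e) ->
  (forall N k k', (N <= k)%N -> (N <= k')%N -> fnorm (u k - u k') <= b N) ->
  exists l, forall N k, (N <= k)%N -> fnorm (u k - l) <= (m * n)%:R * b N.
Proof.
move=> b0 ub.
have b_ge0 N : 0 <= b N by rewrite (le_trans (fnorm_ge0 (u N - u N))) ?ub.
have /choice[l ul] (ij : 'I_m * 'I_n) : exists l, forall N k, (N <= k)%N ->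
    `|u k ij.1 ij.2 - l| <= b N.
  apply: cauchy_rate_lim => // N k k' Nk Nk'.
  by have := entry_le_fnorm (u k - u k') ij.1 ij.2; rewrite !mxE => /le_trans->; rewrite ?ub.
exists (\matrix_(i, j) l (i, j)) => N k Nk.
by apply: fnorm_le_entries => // i j; rewrite !mxE; exact: (ul (i, j)).
Qed.

Definition inv_succ (n : nat) : R := n.+1%:R^-1.

Lemma inv_succ_gt0 n : 0 < inv_succ n.
Proof. by rewrite invr_gt0 ltr0n. Qed.

Lemma inv_succ_le1 n : inv_succ n <= 1.
Proof. by rewrite invf_le1 ?ltr0n // ler1n. Qed.

Lemma inv_succ_le N n : (N <= n)%N -> inv_succ n <= inv_succ N.
Proof. by move=> Nn; rewrite lef_pV2 ?posrE ?ltr0n // ler_nat ltnS. Qed.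

Lemma inv_succ_small e : 0 < e -> exists N, forall n, (N <= n)%N -> inv_succ n < e.
Proof.
move=> e0; exists (Num.truncn e^-1) => n Nn; apply: le_lt_trans (inv_succ_le Nn) _.
by rewrite -[X in _ < X]invrK ltf_pV2 ?posrE ?invr_gt0 ?ltr0n // truncnS_gt.
Qed.

Lemma ler_of_inv_succ x y k :
  (exists N, forall n, (N <= n)%N -> x <= y + k * inv_succ n) -> x <= y.
Proof.
move=> [N xy]; apply/ler_addgt0Pr => e e0.
have k1 : 0 < `|k| + 1 by rewrite ltr_pwDr ?normr_ge0.
have [N' small] := inv_succ_small (divr_gt0 e0 k1).
have := xy _ (leq_maxl N N'); have := small _ (leq_maxr N N').
have := inv_succ_gt0 (maxn N N'); have := ler_norm k.
by rewrite ltr_pdivlMr // => eps_small k_le; nra.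
Qed.

End CauchyRate.

Section Objective.
Variables (R : realType) (p r : nat) (lam1 lam2 : R).
Hypotheses (lam1_gt0 : 0 < lam1) (lam2_gt0 : 0 < lam2).
Variables (G : {set {set 'I_p}}) (d : 'cV[R]_p).

Local Notation MM := 'M[R]_(p, r).
Local Notation XX := ('cV[R]_r * 'cV[R]_p)%type.
Local Notation ELL L := (ell lam1 lam2 G d L).
Local Notation XO L := (X0 lam1 lam2 G d L).
Implicit Types (L H Y V : MM) (x y : XX).

Definition obj L x := lhat lam1 lam2 G d L x.1 x.2.
Definition resid L x := d - L *m x.1 - x.2.
Definition gradL L x := (L *m x.1 + x.2 - d) *m x.1^T.
Definition midpoint x y : XX := (2^-1 *: (x.1 + y.1), 2^-1 *: (x.2 + y.2)).
Definition gap L x y :=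
  fnorm (L *m (x.1 - y.1) + (x.2 - y.2)) ^+ 2 + lam1 * fnorm (x.1 - y.1) ^+ 2.

Lemma objE L x : obj L x =
  2^-1 * fnorm (resid L x) ^+ 2 + lam1 / 2 * fnorm x.1 ^+ 2 + lam2 * l1linf G x.2.
Proof. by []. Qed.

Lemma obj_ge0 L x : 0 <= obj L x.
Proof.
have := sqr_ge0 (fnorm (resid L x)); have := mulr_ge0 (ltW lam1_gt0) (sqr_ge0 (fnorm x.1)).
have := mulr_ge0 (ltW lam2_gt0) (l1linf_ge0 G x.2); rewrite objE; lra.
Qed.

Lemma obj00 L : obj L (0, 0) = 2^-1 * fnorm d ^+ 2.
Proof. by rewrite objE /resid /= mulmx0 !subr0 l1linf0 fnorm0 expr0n !mulr0 !addr0. Qed.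

Lemma gradLE L x : gradL L x = - (resid L x *m x.1^T).
Proof. by rewrite -mulNmx; congr (_ *m _); apply/matrixP => i j; rewrite !mxE; ring. Qed.

Lemma obj_shiftL L H x :
  obj (L + H) x = obj L x + mdot (gradL L x) H + 2^-1 * fnorm (H *m x.1) ^+ 2.
Proof.
have residD : resid (L + H) x = resid L x - H *m x.1.
  by rewrite /resid mulmxDl opprD addrA [d - _ - _ - _]addrAC.
by rewrite !objE residD gradLE mdotNl mdot_outer fnorm_sqrB; field.
Qed.

Lemma obj_shiftx L x y : obj L y = obj L x
  - mdot (resid L x) (L *m (y.1 - x.1) + (y.2 - x.2))
  + 2^-1 * fnorm (L *m (y.1 - x.1) + (y.2 - x.2)) ^+ 2
  + lam1 * mdot x.1 (y.1 - x.1) + lam1 / 2 * fnorm (y.1 - x.1) ^+ 2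
  + lam2 * (l1linf G y.2 - l1linf G x.2).
Proof.
have residB : resid L y = resid L x - (L *m (y.1 - x.1) + (y.2 - x.2)).
  by apply/matrixP => i j; rewrite /resid mulmxBr !mxE; ring.
have r_sqr : fnorm y.1 ^+ 2 =
    fnorm x.1 ^+ 2 + 2 * mdot x.1 (y.1 - x.1) + fnorm (y.1 - x.1) ^+ 2.
  by rewrite -fnorm_sqrD addrC subrK.
by rewrite !objE residB r_sqr (fnorm_sqrB (resid L x)); field.
Qed.

Lemma obj_midpoint L x y :
  obj L (midpoint x y) + 8^-1 * gap L x y <= 2^-1 * obj L x + 2^-1 * obj L y.
Proof.
have resid_mid : resid L (midpoint x y) = 2^-1 *: (resid L x + resid L y).
  by apply/matrixP => i j; rewrite /resid -scalemxAr mulmxDr !mxE; lra.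
have residB : resid L x - resid L y = - (L *m (x.1 - y.1) + (x.2 - y.2)).
  by apply/matrixP => i j; rewrite /resid mulmxBr !mxE; ring.
rewrite !objE resid_mid /= !fnorm_sqr_mid residB fnormN /gap.
have := l1linf_mid G x.2 y.2; have := lam2_gt0; nra.
Qed.

Lemma ellE L : ELL L = inf [set obj L x | x in [set: XX]].
Proof. by []. Qed.

Lemma obj_image_lbound L : has_lbound [set obj L x | x in [set: XX]].
Proof. by exists 0 => _ [x _ <-]; exact: obj_ge0. Qed.

Lemma obj_image_neq0 L : nonempty [set obj L x | x in [set: XX]].
Proof. by exists (obj L (0, 0)), (0, 0). Qed.

Lemma ell_le_obj L x : ELL L <= obj L x.
Proof. by rewrite ellE; apply: (ge_inf (obj_image_lbound L)); exists x. Qed.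

Lemma ell_approx L e : 0 < e -> exists x, obj L x < ELL L + e.
Proof.
move=> e0; have has_inf := conj (obj_image_neq0 L) (obj_image_lbound L).
by rewrite ellE; have [_ [x _ <-] xe] := inf_adherent e0 has_inf; exists x.
Qed.

Lemma X0_obj L x : XO L x -> obj L x = ELL L.
Proof.
move=> xmin; apply/eqP; rewrite eq_le ell_le_obj andbT.
by rewrite ellE; apply: lb_le_inf (obj_image_neq0 L) _ => _ [y _ <-]; exact: xmin.
Qed.

Lemma X0_of_obj_le L x : obj L x <= ELL L -> XO L x.
Proof. by move=> xell r' s'; exact: le_trans xell (ell_le_obj L (r', s')). Qed.

Lemma gap_le_obj L x y :
  8^-1 * gap L x y <= 2^-1 * (obj L x - ELL L) + 2^-1 * (obj L y - ELL L).
Proof. by have := obj_midpoint L x y; have := ell_le_obj L (midpoint x y); lra. Qed.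

Lemma gap_le_X0 L x xL : XO L xL -> gap L x xL <= 4 * (obj L x - ELL L).
Proof. by move=> xLmin; have := gap_le_obj L x xL; rewrite (X0_obj xLmin); lra. Qed.

Lemma gap_le0 L x y : gap L x y <= 0 -> x = y.
Proof.
rewrite /gap => g0.
have r0 : fnorm (x.1 - y.1) ^+ 2 = 0.
  apply/eqP; rewrite eq_le sqr_ge0 andbT -(pmulr_rle0 _ lam1_gt0).
  by have := sqr_ge0 (fnorm (L *m (x.1 - y.1) + (x.2 - y.2))); lra.
move: g0; rewrite r0 mulr0 addr0.
move/eqP: r0; rewrite sqrf_eq0 => /eqP/fnorm_eq0/eqP; rewrite subr_eq0 => /eqP r_eq.
rewrite r_eq subrr mulmx0 add0r => s0.
have s0' : fnorm (x.2 - y.2) = 0 by apply/eqP; rewrite -sqrf_eq0 eq_le sqr_ge0 s0.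
move/fnorm_eq0/eqP: s0'; rewrite subr_eq0 => /eqP s_eq.
by rewrite [x]surjective_pairing [y]surjective_pairing r_eq s_eq.
Qed.

Lemma X0_unique L x y : XO L x -> XO L y -> x = y.
Proof.
move=> xmin ymin; apply: gap_le0 (le_trans (gap_le_X0 x ymin) _).
by rewrite (X0_obj xmin) subrr mulr0.
Qed.

Definition gap_modulus L := (1 + fnorm L) * (1 + (Num.sqrt lam1)^-1).

Lemma gap_modulus_ge0 L : 0 <= gap_modulus L.
Proof. by rewrite mulr_ge0 // addr_ge0 ?fnorm_ge0 ?invr_ge0 ?sqrtr_ge0. Qed.

Lemma fnorm_sub_le_gap L x y c : 0 <= c -> gap L x y <= c ^+ 2 ->
  fnorm (x.1 - y.1) <= gap_modulus L * c /\ fnorm (x.2 - y.2) <= gap_modulus L * c.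
Proof.
move=> c0; rewrite /gap => g_le.
have sl0 : 0 < Num.sqrt lam1 by rewrite sqrtr_gt0.
have dr : fnorm (x.1 - y.1) <= c / Num.sqrt lam1.
  apply: ler_of_sqr; first by rewrite divr_ge0 ?sqrtr_ge0.
  rewrite expr_div_n (sqr_sqrtr (ltW lam1_gt0)) ler_pdivlMr // mulrC.
  by have := sqr_ge0 (fnorm (L *m (x.1 - y.1) + (x.2 - y.2))); lra.
have dw : fnorm (L *m (x.1 - y.1) + (x.2 - y.2)) <= c.
  apply: ler_of_sqr => //.
  by have := mulr_ge0 (ltW lam1_gt0) (sqr_ge0 (fnorm (x.1 - y.1))); lra.
have ds : fnorm (x.2 - y.2) <= fnorm L * (c / Num.sqrt lam1) + c.
  rewrite -[x.2 - y.2](addKr (L *m (x.1 - y.1))).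
  apply: le_trans (fnormD_le _ _) _; rewrite fnormN lerD //.
  exact: le_trans (fnorm_mulmx_le _ _) (ler_wpM2l (fnorm_ge0 L) dr).
have -> : gap_modulus L * c =
    c / Num.sqrt lam1 + (fnorm L * (c / Num.sqrt lam1) + c) + fnorm L * c.
  by rewrite /gap_modulus; ring.
have := divr_ge0 c0 (ltW sl0); have := mulr_ge0 (fnorm_ge0 L) c0.
have := mulr_ge0 (fnorm_ge0 L) (divr_ge0 c0 (ltW sl0)).
by split; lra.
Qed.

Lemma obj_le_near L c : exists K, forall x y t,
  obj L x <= c -> fnorm (y.1 - x.1) <= t -> fnorm (y.2 - x.2) <= t -> t <= 1 ->
  obj L y <= obj L x + K * t.
Proof.
set a := fnorm L.
exists ((1 + 2 * c) * (a + 1) + 2^-1 * (a + 1) ^+ 2 + (lam1 + 2 * c) + lam1 / 2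
        + lam2 * #|G|%:R) => x y t xc dr ds t1.
have t0 : 0 <= t := le_trans (fnorm_ge0 _) dr.
set w := L *m (y.1 - x.1) + (y.2 - x.2).
have fw : fnorm w <= (a + 1) * t.
  apply: le_trans (fnormD_le _ _) _; rewrite mulrDl mul1r lerD //.
  exact: le_trans (fnorm_mulmx_le _ _) (ler_wpM2l (fnorm_ge0 L) dr).
have e_sqr : fnorm (resid L x) ^+ 2 <= 2 * c.
  have := mulr_ge0 (ltW lam1_gt0) (sqr_ge0 (fnorm x.1)).
  by have := mulr_ge0 (ltW lam2_gt0) (l1linf_ge0 G x.2); move: xc; rewrite objE; lra.
have r_sqr : lam1 * fnorm x.1 ^+ 2 <= 2 * c.
  have := sqr_ge0 (fnorm (resid L x)).
  by have := mulr_ge0 (ltW lam2_gt0) (l1linf_ge0 G x.2); move: xc; rewrite objE; lra.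
have e_le : fnorm (resid L x) <= 1 + 2 * c by have := fnorm_ge0 (resid L x); nra.
have r_le : lam1 * fnorm x.1 <= lam1 + 2 * c.
  have r1 : fnorm x.1 <= 1 + fnorm x.1 ^+ 2 by nra.
  by have := ler_wpM2l (ltW lam1_gt0) r1; lra.
have T1 : - mdot (resid L x) w <= (1 + 2 * c) * ((a + 1) * t).
  rewrite -mdotNl (le_trans (mdot_le_fnorm _ _)) // fnormN.
  by apply: ler_pM; rewrite ?fnorm_ge0.
have T2 : fnorm w ^+ 2 <= (a + 1) ^+ 2 * t.
  apply: le_trans (ler_sqr_of (fnorm_ge0 _) fw) _.
  by rewrite exprMn ler_wpM2l ?sqr_ge0 // expr2 ler_piMr.
have T3 : lam1 * mdot x.1 (y.1 - x.1) <= (lam1 + 2 * c) * t.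
  rewrite (le_trans (ler_wpM2l (ltW lam1_gt0) (mdot_le_fnorm _ _))) // mulrA.
  apply: ler_pM => //; last exact: fnorm_ge0.
  by rewrite mulr_ge0 ?fnorm_ge0 ?ltW.
have T4 : fnorm (y.1 - x.1) ^+ 2 <= t.
  by apply: le_trans (ler_sqr_of (fnorm_ge0 _) dr) _; rewrite expr2 ler_piMr.
have T5 : lam2 * (l1linf G y.2 - l1linf G x.2) <= lam2 * #|G|%:R * t.
  rewrite -mulrA; apply: (ler_wpM2l (ltW lam2_gt0)).
  exact: le_trans (l1linfB_le _ _ _) (ler_wpM2l (ler0n _ _) ds).
have := ler_wpM2l (ltW lam1_gt0) T4.
by rewrite (obj_shiftx L x y) -/w; lra.
Qed.

Lemma gap_near_min L x y e : obj L x <= ELL L + e ^+ 2 -> obj L y <= ELL L + e ^+ 2 ->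
  gap L x y <= (3 * e) ^+ 2.
Proof. by have := gap_le_obj L x y; have := sqr_ge0 e; rewrite exprMn; lra. Qed.

Lemma X0_of_near_min L (xs : nat -> XX) x c :
  (forall n, obj L (xs n) <= ELL L + inv_succ R n ^+ 2) ->
  (forall n, fnorm (x.1 - (xs n).1) <= c * inv_succ R n /\
             fnorm (x.2 - (xs n).2) <= c * inv_succ R n) ->
  XO L x.
Proof.
move=> xs_min xs_x; have [K K_near] := obj_le_near L (ELL L + 1).
have c0 : 0 <= c.
  by have := le_trans (fnorm_ge0 _) (xs_x 0%N).1; rewrite pmulr_lge0 ?inv_succ_gt0.
apply: X0_of_obj_le; apply: (ler_of_inv_succ (k := 1 + K * c)).
have c1 : 0 < (c + 1)^-1 by rewrite invr_gt0; lra.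
have [N0 N0_small] := inv_succ_small c1.
exists N0 => N N0N; set eta := inv_succ R N.
have eta0 : 0 < eta := inv_succ_gt0 R N.
have eta1 : eta <= 1 := inv_succ_le1 R N.
have ceta1 : c * eta <= 1.
  have c1' : 0 < c + 1 by lra.
  by have := N0_small N N0N; rewrite -/eta -[X in _ < X]div1r ltr_pdivlMr //; nra.
have [dr ds] := xs_x N; have xN := xs_min N; rewrite -/eta in dr ds xN.
have eta2 : eta ^+ 2 <= eta by rewrite expr2 ler_piMr // ltW.
have xN1 : obj L (xs N) <= ELL L + 1 by lra.
by have := K_near (xs N) x (c * eta) xN1 dr ds ceta1; lra.
Qed.

Lemma exists_X0 L : exists x, XO L x.
Proof.
have /choice[xs xs_min] n : exists x, obj L x < ELL L + inv_succ R n ^+ 2.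
  by apply: ell_approx; rewrite exprn_gt0 ?inv_succ_gt0.
have xs_near N n : (N <= n)%N -> obj L (xs n) <= ELL L + inv_succ R N ^+ 2.
  move=> Nn; rewrite (le_trans (ltW (xs_min n))) // lerD2l.
  by rewrite ler_sqr_of ?inv_succ_le // ltW // inv_succ_gt0.
pose k := gap_modulus L * 3.
have k0 : 0 <= k by rewrite mulr_ge0 ?gap_modulus_ge0.
have xs_dist N n n' : (N <= n)%N -> (N <= n')%N ->
    fnorm ((xs n).1 - (xs n').1) <= k * inv_succ R N /\
    fnorm ((xs n).2 - (xs n').2) <= k * inv_succ R N.
  move=> Nn Nn'; rewrite /k -mulrA; apply: fnorm_sub_le_gap.
    by rewrite mulr_ge0 ?ltW ?inv_succ_gt0.
  by apply: gap_near_min; exact: xs_near.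
have k_small e : 0 < e -> exists N, k * inv_succ R N < e.
  move=> e0; have k1 : 0 < k + 1 by lra.
  have [N small] := inv_succ_small (divr_gt0 e0 k1); exists N.
  have := small N (leqnn N); rewrite ltr_pdivlMr //.
  by have := inv_succ_gt0 R N; nra.
have [lr lr_lim] := cauchy_rate_lim_mx k_small (fun N n n' Nn Nn' => (xs_dist N n n' Nn Nn').1).
have [ls ls_lim] := cauchy_rate_lim_mx k_small (fun N n n' Nn Nn' => (xs_dist N n n' Nn Nn').2).
exists (lr, ls); apply: (X0_of_near_min (c := ((r * 1)%:R + (p * 1)%:R) * k)).
  by move=> n; exact: ltW.
move=> n; have keta := mulr_ge0 k0 (ltW (inv_succ_gt0 R n)).
have := mulr_ge0 (ler0n R (p * 1)) keta; have := mulr_ge0 (ler0n R (r * 1)) keta.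
have := lr_lim n n (leqnn n); have := ls_lim n n (leqnn n).
by rewrite /= -[lr - _]opprB -[ls - _]opprB !fnormN; split; lra.
Qed.

Local Notation rho := (fnorm d / Num.sqrt lam1).

Lemma rho_ge0 : 0 <= rho.
Proof. by rewrite divr_ge0 ?fnorm_ge0 ?sqrtr_ge0. Qed.

Lemma X0_le_obj00 L x : XO L x ->
  fnorm (resid L x) ^+ 2 + lam1 * fnorm x.1 ^+ 2 <= fnorm d ^+ 2.
Proof.
move=> xmin; have := xmin 0 0; rewrite -/(obj L x) -/(obj L (0, 0)) obj00 objE.
by have := mulr_ge0 (ltW lam2_gt0) (l1linf_ge0 G x.2); lra.
Qed.

Lemma fnorm_resid_X0 L x : XO L x -> fnorm (resid L x) <= fnorm d.
Proof.
move=> /X0_le_obj00 le_d; apply: ler_of_sqr; first exact: fnorm_ge0.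
by have := mulr_ge0 (ltW lam1_gt0) (sqr_ge0 (fnorm x.1)); lra.
Qed.

Lemma fnorm_X0_1 L x : XO L x -> fnorm x.1 <= rho.
Proof.
move=> /X0_le_obj00 le_d; apply: ler_of_sqr; first exact: rho_ge0.
rewrite expr_div_n (sqr_sqrtr (ltW lam1_gt0)) ler_pdivlMr // mulrC.
by have := sqr_ge0 (fnorm (resid L x)); lra.
Qed.

Lemma fnorm_mulmx_X0 L H x : XO L x -> fnorm (H *m x.1) <= fnorm H * rho.
Proof.
move=> xmin; apply: le_trans (fnorm_mulmx_le _ _) _.
by apply: (ler_wpM2l (fnorm_ge0 H)); exact: fnorm_X0_1 xmin.
Qed.

Lemma fnorm_gradL_X0 L x : XO L x -> fnorm (gradL L x) <= fnorm d * rho.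
Proof.
move=> xmin; rewrite gradLE fnormN (le_trans (fnorm_mulmx_le _ _)) // fnorm_tr.
by apply: ler_pM; [exact: fnorm_ge0 | exact: fnorm_ge0 | exact: fnorm_resid_X0 xmin
  | exact: fnorm_X0_1 xmin].
Qed.

Lemma mdot_gradL_X0 L x H : XO L x -> mdot (gradL L x) H <= fnorm d * rho * fnorm H.
Proof.
move=> xmin; apply: le_trans (mdot_le_fnorm _ _) _.
by apply: (ler_wpM2r (fnorm_ge0 H)); exact: fnorm_gradL_X0 xmin.
Qed.

Lemma ell_shift_le L H xL : XO L xL ->
  ELL (L + H) <= ELL L + mdot (gradL L xL) H + 2^-1 * fnorm (H *m xL.1) ^+ 2.
Proof. by move=> xLmin; rewrite -(X0_obj xLmin) -obj_shiftL ell_le_obj. Qed.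

Lemma ell_sub_le L1 L2 : ELL L1 - ELL L2 <=
  fnorm d * rho * fnorm (L1 - L2) + 2^-1 * (fnorm (L1 - L2) * rho) ^+ 2.
Proof.
have [x2 x2min] := exists_X0 L2.
rewrite lerBlDl; have := ell_shift_le (L1 - L2) x2min; rewrite addrC subrK.
move=> /le_trans ->; rewrite // -addrA lerD2l lerD ?mdot_gradL_X0 // ler_wpM2l ?invr_ge0 //.
exact: ler_sqr_of (fnorm_ge0 _) (fnorm_mulmx_X0 (L1 - L2) x2min).
Qed.

Lemma ell_lipschitz B L1 L2 : fnorm L1 <= B -> fnorm L2 <= B ->
  `|ELL L1 - ELL L2| <= (fnorm d * rho + B * rho ^+ 2) * fnorm (L1 - L2).
Proof.
move=> L1B L2B; set h := fnorm (L1 - L2).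
have h0 : 0 <= h := fnorm_ge0 _.
have h2B : h <= 2 * B by have := fnormD_le L1 (- L2); rewrite fnormN -/h; lra.
have quad : 2^-1 * (h * rho) ^+ 2 <= B * rho ^+ 2 * h.
  have := ler_wpM2l (sqr_ge0 rho) (ler_wpM2r h0 h2B).
  by move: (rho) => s; rewrite exprMn; lra.
have bound : fnorm d * rho * h + 2^-1 * (h * rho) ^+ 2 <= (fnorm d * rho + B * rho ^+ 2) * h.
  by rewrite mulrDl lerD2l.
have := ell_sub_le L2 L1; rewrite -[L2 - L1]opprB fnormN -/h => le21.
rewrite ler_norml; apply/andP; split; last exact: le_trans (ell_sub_le L1 L2) bound.
by rewrite lerNl opprB; exact: le_trans le21 bound.
Qed.

Lemma gap_X0_le L Y xL xY : XO L xL -> XO Y xY ->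
  gap L xY xL <= 4 * (2 * (fnorm d * rho) * fnorm (Y - L) + (fnorm (Y - L) * rho) ^+ 2).
Proof.
move=> xLmin xYmin; set H := Y - L; set h := fnorm H.
have objL : obj L xY = ELL Y + mdot (gradL Y xY) (- H) + 2^-1 * fnorm (- H *m xY.1) ^+ 2.
  by rewrite -(X0_obj xYmin) -obj_shiftL /H opprB subrKC.
have ellY : ELL Y <= ELL L + mdot (gradL L xL) H + 2^-1 * fnorm (H *m xL.1) ^+ 2.
  by rewrite -[Y in ELL Y](subrKC L); exact: ell_shift_le.
have gL := mdot_gradL_X0 H xLmin; have gY := mdot_gradL_X0 (- H) xYmin.
have qL := ler_sqr_of (fnorm_ge0 _) (fnorm_mulmx_X0 H xLmin).
have qY := ler_sqr_of (fnorm_ge0 _) (fnorm_mulmx_X0 (- H) xYmin).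
have := gap_le_X0 xY xLmin; rewrite objL; rewrite fnormN -/h in gY qY.
move: gL gY qL qY ellY; rewrite -/h.
move: (gap L xY xL) (ELL L) (ELL Y) (fnorm d * rho) (h * rho) => g eL eY a b.
move: (mdot (gradL L xL) H) (mdot (gradL Y xY) (- H)) => mL mY.
move: (fnorm (H *m xL.1) ^+ 2) (fnorm (- H *m xY.1) ^+ 2) => fL fY; lra.
Qed.

Lemma gradL_diff L Y xL xY V : XO L xL -> XO Y xY ->
  mdot (gradL Y xY) V - mdot (gradL L xL) V <=
  (fnorm (Y - L) * rho + fnorm L * fnorm (xY.1 - xL.1) + fnorm (xY.2 - xL.2)) * (fnorm V * rho)
  + fnorm d * (fnorm V * fnorm (xY.1 - xL.1)).
Proof.
move=> xLmin xYmin; set H := Y - L.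
have residB : resid Y xY - resid L xL =
    - (H *m xY.1) - (L *m (xY.1 - xL.1) + (xY.2 - xL.2)).
  by apply/matrixP => i j; rewrite /resid /H !mulmxBl !mulmxBr !mxE; ring.
have -> : mdot (gradL Y xY) V - mdot (gradL L xL) V =
    - mdot (resid Y xY - resid L xL) (V *m xY.1) - mdot (resid L xL) (V *m (xY.1 - xL.1)).
  by rewrite !gradLE !mdotNl !mdot_outer mulmxBr mdotBl mdotBr; ring.
have dresid : fnorm (resid Y xY - resid L xL) <=
    fnorm H * rho + fnorm L * fnorm (xY.1 - xL.1) + fnorm (xY.2 - xL.2).
  rewrite residB; apply: le_trans (fnormD_le _ _) _; rewrite !fnormN -addrA.
  apply: lerD; first exact: fnorm_mulmx_X0 xYmin.
  by apply: le_trans (fnormD_le _ _) _; rewrite lerD2r fnorm_mulmx_le.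
rewrite -!mdotNl; apply: lerD.
  rewrite (le_trans (mdot_le_fnorm _ _)) // fnormN.
  by apply: ler_pM; rewrite ?fnorm_ge0 //; exact: fnorm_mulmx_X0 xYmin.
rewrite (le_trans (mdot_le_fnorm _ _)) // fnormN.
apply: ler_pM; rewrite ?fnorm_ge0 ?fnorm_mulmx_le //; exact: fnorm_resid_X0 xLmin.
Qed.

Lemma gradL_X0_near L xL V : XO L xL -> exists K, forall Y xY, XO Y xY ->
  fnorm (Y - L) <= 1 ->
  mdot (gradL Y xY) V - mdot (gradL L xL) V <= K * Num.sqrt (fnorm (Y - L)).
Proof.
move=> xLmin; pose c := 4 * (2 * (fnorm d * rho) + rho ^+ 2).
have c0 : 0 <= c by rewrite mulr_ge0 // addr_ge0 ?sqr_ge0 // !mulr_ge0 ?fnorm_ge0 ?rho_ge0.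
pose k := gap_modulus L * Num.sqrt c.
have k0 : 0 <= k by rewrite mulr_ge0 ?gap_modulus_ge0 ?sqrtr_ge0.
exists (rho * (fnorm V * rho) + ((fnorm L + 1) * (fnorm V * rho) + fnorm d * fnorm V) * k).
move=> Y xY xYmin; set h := fnorm (Y - L) => h1.
have h0 : 0 <= h := fnorm_ge0 _.
have hh : h <= Num.sqrt h.
  by rewrite -{1}(sqr_sqrtr h0) expr2 ler_piMr ?sqrtr_ge0 // -sqrtr1 ler_wsqrtr.
have gap_le : gap L xY xL <= (Num.sqrt c * Num.sqrt h) ^+ 2.
  rewrite exprMn !sqr_sqrtr //; apply: le_trans (gap_X0_le xLmin xYmin) _; rewrite -/h.
  have hsq : h ^+ 2 <= h by rewrite expr2 ler_piMr.
  have := ler_wpM2l (sqr_ge0 rho) hsq; have := mulr_ge0 (fnorm_ge0 d) rho_ge0.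
  by rewrite /c [(h * _) ^+ 2]exprMn; move: (rho ^+ 2) (fnorm d * rho) => s a; nra.
have [dr ds] := fnorm_sub_le_gap (mulr_ge0 (sqrtr_ge0 c) (sqrtr_ge0 h)) gap_le.
rewrite mulrA -/k in dr ds.
have Vr0 : 0 <= fnorm V * rho by rewrite mulr_ge0 ?fnorm_ge0 ?rho_ge0.
apply: le_trans (gradL_diff V xLmin xYmin) _; rewrite -/h.
have a1 := ler_wpM2r Vr0 (ler_wpM2r rho_ge0 hh).
have a2 := ler_wpM2r Vr0 (ler_wpM2l (fnorm_ge0 L) dr).
have a3 := ler_wpM2r Vr0 ds.
have a4 := ler_wpM2l (fnorm_ge0 d) (ler_wpM2l (fnorm_ge0 V) dr).
move: a1 a2 a3 a4.
move: (fnorm V * rho) (fnorm (xY.1 - xL.1)) (fnorm (xY.2 - xL.2)) => v dr1 ds1.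
by move: (Num.sqrt h) (fnorm L) (fnorm V) (fnorm d) => sh l nv nd; lra.
Qed.

Lemma gradL_X0_usc L xL V e : XO L xL -> 0 < e -> exists2 del, 0 < del &
  forall Y xY, XO Y xY -> fnorm (Y - L) < del ->
  mdot (gradL Y xY) V <= mdot (gradL L xL) V + e.
Proof.
move=> xLmin e0; have [K near] := gradL_X0_near V xLmin.
have K1 : 0 < `|K| + 1 by rewrite ltr_pwDr ?normr_ge0.
pose q := e / (`|K| + 1).
have q0 : 0 < q by rewrite divr_gt0.
exists (Num.min 1 (q ^+ 2)); first by rewrite lt_min ltr01 exprn_gt0.
move=> Y xY xYmin; rewrite lt_min => /andP[h1 hq].
have shq : Num.sqrt (fnorm (Y - L)) < q.
  by rewrite -(gtr0_norm q0) -sqrtr_sqr ltr_sqrt ?exprn_gt0.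
have := near Y xY xYmin (ltW h1); have := ler_norm K.
have := sqrtr_ge0 (fnorm (Y - L)); move: shq; rewrite ltr_pdivlMr //.
by move: (Num.sqrt _) => sh; nra.
Qed.

Lemma ell_diff_quot_le Y xY V t : XO Y xY -> 0 < t ->
  (ELL (Y + t *: V) - ELL Y) / t <= mdot (gradL Y xY) V + t / 2 * fnorm (V *m xY.1) ^+ 2.
Proof.
move=> xYmin t0; rewrite ler_pdivrMr // lerBlDl.
apply: le_trans (ell_shift_le (t *: V) xYmin) _.
by rewrite mdotZr -scalemxAl fnormZ gtr0_norm // exprMn; lra.
Qed.

Local Notation f := (fun L' => ELL L').

Lemma gradL_in_clarke L xL : XO L xL -> clarke_subdiff f L (gradL L xL).
Proof.
move=> xLmin V eps delta eps0 delta0.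
pose q := fnorm (V *m xL.1) ^+ 2.
have V1 : 0 < fnorm V + 1 by rewrite ltr_pwDr ?fnorm_ge0.
have q1 : 0 < q + 1 by rewrite ltr_pwDr ?sqr_ge0.
pose t := Num.min (delta / 2 / (fnorm V + 1)) (eps / (q + 1)).
have t0 : 0 < t by rewrite lt_min !divr_gt0.
have tdelta : t * (fnorm V + 1) <= delta / 2 by rewrite -ler_pdivlMr // ge_min lexx.
have teps : t * (q + 1) <= eps by rewrite -ler_pdivlMr // ge_min lexx orbT.
have tV0 := mulr_ge0 (ltW t0) (fnorm_ge0 V).
exists (L - t *: V), t; split; last split.
- by rewrite addrAC subrr add0r fnormN fnormZ gtr0_norm //; lra.
- by rewrite t0 /=; lra.
rewrite subrK; have := ell_diff_quot_le (- V) xLmin t0.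
rewrite scalerN mdotNr mulNmx fnormN -/q => quot.
have -> : (ELL L - ELL (L - t *: V)) / t = - ((ELL (L - t *: V) - ELL L) / t).
  by rewrite -mulNr opprB.
have := mulr_ge0 (ltW t0) (sqr_ge0 (fnorm (V *m xL.1))); rewrite -/q.
by move: quot teps; move: (_ / t) => u; nra.
Qed.

Lemma clarke_subdiff_X0 L xL xi : XO L xL -> clarke_subdiff f L xi -> xi = gradL L xL.
Proof.
move=> xLmin xi_sub; set V := xi - gradL L xL.
suff VV : mdot V V <= 0.
  by apply/eqP; rewrite -subr_eq0 -/V; apply/eqP/mdotxx_eq0/eqP; rewrite eq_le VV mdotxx_ge0.
rewrite {1}/V mdotBl subr_le0; apply/ler_addgt0Pr => e e0.
have e3 : 0 < e / 3 by rewrite divr_gt0.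
have [del del0 usc] := gradL_X0_usc V xLmin e3.
pose q := (fnorm V * rho) ^+ 2.
have q1 : 0 < q + 1 by rewrite ltr_pwDr ?sqr_ge0.
have min0 : 0 < Num.min del (e / 3 / (q + 1)) by rewrite lt_min del0 !divr_gt0.
have [Y [t [+ [/andP[t0 +] quot]]]] := xi_sub V (e / 3) _ e3 min0.
rewrite !lt_min => /andP[Ydel _] /andP[_ tq].
have [xY xYmin] := exists_X0 Y.
have := ell_diff_quot_le V xYmin t0; have := usc Y xY xYmin Ydel.
have := ler_sqr_of (fnorm_ge0 _) (fnorm_mulmx_X0 V xYmin); rewrite -/q => qY.
have := ler_wpM2l (ltW t0) qY; move: tq; rewrite ltr_pdivlMr //.
move: quot; move: (_ / t) (mdot xi V) (mdot (gradL L xL) V) (mdot (gradL Y xY) V) => u a b c.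
by move: (fnorm (V *m xY.1) ^+ 2) => qy; nra.
Qed.

Lemma clarke_subdiff_eq L xL : XO L xL -> clarke_subdiff f L = [set gradL L xL].
Proof.
move=> xLmin; apply/seteqP; split => [xi /(clarke_subdiff_X0 xLmin) -> //|_ ->].
exact: gradL_in_clarke.
Qed.

Lemma X0_image_gradL L xL : XO L xL -> [set gradL L x | x in XO L] = [set gradL L xL].
Proof.
move=> xLmin; apply/seteqP; split => [_ [x xmin <-]|_ ->]; last by exists xL.
by rewrite /= (X0_unique xmin xLmin).
Qed.

End Objective.

Lemma conv_hull_set1 (R : realType) m n (a : 'M[R]_(m, n)) : conv_hull [set a] = [set a].
Proof.
apply/seteqP; split => [_ [k [w [P [_ [w1 [Pa ->]]]]]]|_ ->].
  rewrite /= (eq_bigr (fun i => w i *: a)) => [|i _]; last by rewrite Pa.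
  by rewrite -scaler_suml w1 scale1r.
exists 1%N, (fun=> 1), (fun=> a); split; first by move=> _; exact: ler01.
by rewrite !big_ord1 scale1r.
Qed.

Lemma compact_fnorm_bounded (R : realType) m n (A : set 'M[R]_(m, n)) :
  compact A -> exists B, forall M, A M -> fnorm M <= B.
Proof.
move=> /compact_bounded[B [_ AB]]; exists ((m * n)%:R * (`|B| + 1)) => M AM.
apply: fnorm_le_entries => [|i j]; first by rewrite addr_ge0.
apply: le_trans (AB (`|B| + 1) _ M AM); last by rewrite (le_lt_trans (ler_norm B)) ?ltrDl.
by rewrite /Num.norm /= mx_normrE (le_bigmax _ (fun ij : _ * _ => `|M ij.1 ij.2|) (i, j)).
Qed.

Theorem proposition3 (R : realType) (p r : nat) (lam1 lam2 : R)
  (G : {set {set 'I_p}}) (hlam1 : 0 < lam1) (hlam2 : 0 < lam2) :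
  (* (1) sub-gradient formula, for every d and L *)
  (forall (d : 'cV[R]_p) (L : 'M[R]_(p, r)),
     clarke_subdiff (fun L' => ell lam1 lam2 G d L') L =
     conv_hull [set (L *m rs.1 + rs.2 - d) *m rs.1^T
               | rs in X0 lam1 lam2 G d L]) /\
  (* (2) uniform boundedness of the sub-gradient and uniform Lipschitzness,
     for d in a bounded set and L in a compact set *)
  (forall (M : R) (Lset : set 'M[R]_(p, r)), compact Lset ->
     (exists C : R, forall (d : 'cV[R]_p) (L : 'M[R]_(p, r)) xi,
        fnorm d <= M -> Lset L ->
        clarke_subdiff (fun L' => ell lam1 lam2 G d L') L xi ->
        fnorm xi <= C) /\
     (exists K : R, forall (d : 'cV[R]_p) (L1 L2 : 'M[R]_(p, r)),
        fnorm d <= M -> Lset L1 -> Lset L2 ->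
        `|ell lam1 lam2 G d L1 - ell lam1 lam2 G d L2| <= K * fnorm (L1 - L2))).
Proof.
split=> [d L | M Lset Lcompact].
  have [xL xLmin] := exists_X0 hlam1 hlam2 G d L.
  rewrite (clarke_subdiff_eq hlam1 hlam2 xLmin) (X0_image_gradL hlam1 hlam2 xLmin).
  by rewrite conv_hull_set1.
pose rhoM := M / Num.sqrt lam1.
have rho_le d : fnorm d <= M -> fnorm d / Num.sqrt lam1 <= rhoM.
  by move=> dM; rewrite ler_wpM2r ?invr_ge0 ?sqrtr_ge0.
split.
  exists (M * rhoM) => d L xi dM _.
  have [xL xLmin] := exists_X0 hlam1 hlam2 G d L.
  move=> /(clarke_subdiff_X0 hlam1 hlam2 xLmin) ->.
  apply: le_trans (fnorm_gradL_X0 hlam1 hlam2 xLmin) _.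
  by apply: ler_pM; rewrite ?fnorm_ge0 ?divr_ge0 ?sqrtr_ge0 ?rho_le.
have [B LB] := compact_fnorm_bounded Lcompact.
exists (M * rhoM + B * rhoM ^+ 2) => d L1 L2 dM L1s L2s.
apply: le_trans (ell_lipschitz hlam1 hlam2 G d (LB L1 L1s) (LB L2 L2s)) _.
have rho0 : 0 <= fnorm d / Num.sqrt lam1 by rewrite divr_ge0 ?fnorm_ge0 ?sqrtr_ge0.
have B0 : 0 <= B := le_trans (fnorm_ge0 L1) (LB L1 L1s).
apply: ler_wpM2r; first exact: fnorm_ge0.
apply: lerD; first by apply: ler_pM; rewrite ?fnorm_ge0 ?rho_le.
by rewrite ler_wpM2l // ler_sqr_of ?rho_le.
Qed.
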